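(* Let $\mathcal{R},\mathcal{R}'$ be finite sets with $|\mathcal{R}|=|\mathcal{R}'|$, let $\mathcal{A}$ be a finite set of attributes, for each $a\in\mathcal{A}$ let $\mathcal{V}_a=\mathcal{V}'_a$ be a finite set and $A_a$ a transition probability matrix on $\mathcal{V}_a$ with positive entries, and let $\mathcal{V}=\mathcal{V}'=\prod_{a\in\mathcal{A}}\mathcal{V}_a$. Then the PRAM mechanism with per-attribute transition matrices $A_a$ is a $Pk$-anonymization for $$k=1+(|\mathcal{R}|-1)\prod_{a\in\mathcal{A}}\mathrm{AR}_a,\qquad \mathrm{AR}_a=\min_{u,v\in\mathcal{V}_a,\ u',v'\in\mathcal{V}'_a}\frac{(A_a)_{u,v'}(A_a)_{v,u'}}{(A_a)_{u,u'}(A_a)_{v,v'}}.$$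
   Context: A table on $(\mathcal{R},\mathcal{V})$ is a map $\mathcal{R}\to\mathcal{V}$; $\mathcal{T}$, $\mathcal{T}'$ denote the sets of tables on $(\mathcal{R},\mathcal{V})$ and $(\mathcal{R}',\mathcal{V}')$. For sets $X,Y$, $X\to Y$ is the set of maps $X\to Y$. A privacy mechanism is $(\mathcal{R},\mathcal{V},\mathcal{R}',\mathcal{V}',\Pi,\Delta)$ with $\Pi$ uniformly distributed over bijections $\mathcal{R}\to\mathcal{R}'$ and $\Delta$ a random variable in $\mathcal{T}\to(\mathcal{R}\to\mathcal{V}')$; it is a privacy mechanism from $T$ to $T'$ if $T,\Pi,\Delta$ are mutually independent and $\Delta(T)=T'\circ\Pi$. A transition probability matrix has nonnegative entries and rows summing to 1. The PRAM mechanism with per-attribute matrices $A_a$: for every $\tau\in\mathcal{T}$, the values $(\Delta(\tau))(r)$, $r\in\mathcal{R}$, are independent and $\Pr[(\Delta(\tau))(r)=v']=\prod_{a\in\mathcal{A}}(A_a)_{\tau(r)_a,v'_a}$, where $w_a$ denotes the $a$-component of $w\in\prod_a\mathcal{V}_a$. $(\Delta,\tau')$ is $Pk$-anonymous if for all random variables $T,T'$ such that $\Delta$ is a privacy mechanism from $T$ to $T'$ and all $r\in\mathcal{R},r'\in\mathcal{R}'$, $\Pr[\Pi(r)=r'\mid T'=\tau']\le1/k$; $\Delta$ is a $Pk$-anonymization if $(\Delta,\tau')$ is $Pk$-anonymous for every $\tau'\in\mathcal{T}'$ for which some $\tau\in\mathcal{T}$ has $\Pr[\Delta(\tau)=\tau'\circ\Pi]\ne0$.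 *)

From HB Require Import structures.
From mathcomp Require Import all_boot all_order all_algebra.
From mathcomp Require Import all_classical all_reals.
From mathcomp Require Import measure probability.
Set Implicit Arguments. Unset Strict Implicit. Unset Printing Implicit Defensive.
Import Order.TTheory GRing.Theory Num.Theory.
Local Open Scope classical_set_scope.
Local Open Scope ring_scope.

Section PRAM.
Context {R : realType} {d : measure_display} {Omega : measurableType d}.
Variable P : probability Omega R.

Definition Pr (E : set Omega) : R := fine (P E).

(** conditional probability Pr[E | F] := Pr[E /\ F] / Pr[F]
    (equals 0 when Pr[F] = 0, by MathComp's convention x / 0 = 0) *)
Definition cPr (E F : set Omega) : R := Pr (E `&` F) / Pr F.

Definition is_rv (X : finType) (Y : Omega -> X) : Prop :=
  forall x, measurable [set w | Y w = x].

Definition indep3 (X Y Z : finType) (F : Omega -> X) (G : Omega -> Y)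
    (H : Omega -> Z) : Prop :=
  forall x y z,
    Pr [set w | F w = x /\ G w = y /\ H w = z] =
    Pr [set w | F w = x] * Pr [set w | G w = y] * Pr [set w | H w = z].

Definition indep_family (I X : finType) (F : I -> Omega -> X) : Prop :=
  forall x : {ffun I -> X},
    Pr [set w | forall i, F i w = x i] = \prod_(i : I) Pr [set w | F i w = x i].

End PRAM.

Definition is_bij (X Y : finType) (f : {ffun X -> Y}) : bool :=
  injectiveb f && [forall y, exists x, f x == y].

Definition transition {R : realType} (V : finType) (M : V -> V -> R) : Prop :=
  (forall u v, 0 <= M u v) /\ (forall u, \sum_(v : V) M u v = 1).

Notation value Va := {dffun forall a, Va a}.
Notation table Rr V := {ffun Rr -> V}.

Section Mech.
Context {R : realType} {d : measure_display} {Omega : measurableType d}.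
Variable P : probability Omega R.
Variables (Rr V Rr' V' : finType).
Variable Pi : Omega -> {ffun Rr -> Rr'}.
Variable Delta : Omega -> {ffun table Rr V -> {ffun Rr -> V'}}.

Definition privacy_mechanism : Prop :=
  is_rv Pi /\ is_rv Delta /\
  forall pi : {ffun Rr -> Rr'},
    Pr P [set w | Pi w = pi] =
      if is_bij pi then (#|[pred f : {ffun Rr -> Rr'} | is_bij f]|%:R)^-1 else 0.

Definition compPi (tau' : table Rr' V') (w : Omega) : {ffun Rr -> V'} :=
  [ffun r => tau' (Pi w r)].

Definition mechanism_from (T : Omega -> table Rr V) (T' : Omega -> table Rr' V') : Prop :=
  indep3 P T Pi Delta /\ forall w, Delta w (T w) = compPi (T' w) w.

Definition Pk_anonymous (k : R) (tau' : table Rr' V') : Prop :=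
  forall (T : Omega -> table Rr V) (T' : Omega -> table Rr' V'),
    is_rv T -> is_rv T' -> mechanism_from T T' ->
    forall (r : Rr) (r' : Rr'),
      cPr P [set w | Pi w r = r'] [set w | T' w = tau'] <= k^-1.

Definition Pk_anonymization (k : R) : Prop :=
  forall tau' : table Rr' V',
    (exists tau : table Rr V,
        Pr P [set w | Delta w tau = compPi tau' w] != 0) ->
    Pk_anonymous k tau'.
End Mech.

Definition is_PRAM {R : realType} {d : measure_display} {Omega : measurableType d}
    (P : probability Omega R) (Rr Att : finType) (Va : Att -> finType)
    (A : forall a : Att, Va a -> Va a -> R)
    (Delta : Omega -> {ffun table Rr (value Va) -> {ffun Rr -> value Va}}) : Prop :=
  forall tau : table Rr (value Va),
    indep_family P (fun r w => Delta w tau r) /\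
    forall (r : Rr) (v' : value Va),
      Pr P [set w | Delta w tau r = v'] = \prod_(a : Att) A a (tau r a) (v' a).

(** Taken as a big min with neutral element 1; since the term u = v, u' = v'
    equals 1 (for positive entries), this is the true minimum whenever Va a is
    nonempty. *)
Definition AR {R : realType} (V : finType) (M : V -> V -> R) : R :=
  \big[Order.min/1]_(u : V) \big[Order.min/1]_(v : V)
   \big[Order.min/1]_(u' : V) \big[Order.min/1]_(v' : V)
     (M u v' * M v u' / (M u u' * M v v')).

Definition PRAM_k {R : realType} (Rr Att : finType) (Va : Att -> finType)
    (A : forall a : Att, Va a -> Va a -> R) : R :=
  1 + (#|Rr|%:R - 1) * \prod_(a : Att) AR (A a).

From mathcomp Require Import all_boot all_order all_algebra perm.
From mathcomp Require Import all_classical all_reals.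
From mathcomp Require Import measure probability.
From mathcomp Require Import ring.
Import Order.TTheory GRing.Theory Num.Theory.
Local Open Scope ring_scope.

(* By Bayes' rule, Pr[Pi r = r' | T' = tau'] is a ratio of two sums over the
   original table tau and the bijection f of Pr[T = tau] times the PRAM
   likelihood of releasing tau' o f from tau, the numerator being restricted
   to f r = r'.  Composing such an f with a transposition (r s), s <> r, gives
   a bijection with f r <> r', injectively in (f, s); only the rows r and s of
   the likelihood change, and their odds ratio is at least prod_a AR_a.  So
   the denominator is at least k times the numerator. *)

Section FiniteRandomVariables.
Local Open Scope classical_set_scope.
Context {R : realType} {d : measure_display} {Omega : measurableType d}.
Variable P : probability Omega R.

Lemma Pr_ge0 (E : set Omega) : 0 <= Pr P E.
Proof. exact/fine_ge0/measure_ge0. Qed.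

Lemma PrU (E F : set Omega) : measurable E -> measurable F -> E `&` F = set0 ->
  Pr P (E `|` F) = Pr P E + Pr P F.
Proof. by move=> mE mF EF; rewrite /Pr measureU // fineD // fin_num_measure. Qed.

Lemma Pr_eq_off_null (N E F : set Omega) :
  measurable N -> measurable E -> measurable F -> Pr P N = 0 ->
  (forall w, ~ N w -> E w <-> F w) -> Pr P E = Pr P F.
Proof.
move=> mN mE mF PN0 EF.
have PN : P N = 0%E.
  by apply/eqP; rewrite -fine_eq0 ?fin_num_measure // -/(Pr P N) PN0.
have PrD G : measurable G -> Pr P G = Pr P (G `\` N).
  move=> mG; rewrite /Pr (measureDI P mG mN).
  rewrite [X in (_ + X)%E](_ : _ = 0%E) ?adde0 //.
  by apply/eqP; rewrite eq_le measure_ge0 andbT -PN measureIr.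
rewrite (PrD E) // (PrD F) //; congr Pr.
by apply/seteqP; split=> w [Gw Nw]; split=> //; apply/(EF _ Nw).
Qed.

Lemma is_rv_pair (K L : finType) (X : Omega -> K) (Y : Omega -> L) :
  is_rv X -> is_rv Y -> is_rv (fun w => (X w, Y w)).
Proof.
move=> hX hY [x y]; rewrite [X in measurable X](_ : _ =
  [set w | X w = x] `&` [set w | Y w = y]); first exact: measurableI.
by apply/seteqP; split=> w /=; [case=> -> ->|case=> -> ->].
Qed.

Section RandomVariable.
Context {K : finType} {X : Omega -> K}.
Hypothesis hX : is_rv X.

Let preimage_cons (x : K) (s : seq K) :
  [set w | X w \in x :: s] = [set w | X w = x] `|` [set w | X w \in s].
Proof.
apply/seteqP; split=> w /=; rewrite inE.
  by case/orP=> [/eqP|]; [left|right].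
by case=> [->|->]; rewrite ?eqxx ?orbT.
Qed.

Let preimage_nil : [set w | X w \in [::]] = set0.
Proof. by apply/seteqP; split. Qed.

Lemma measurable_rv_mem (s : seq K) : measurable [set w | X w \in s].
Proof.
elim: s => [|x s IH]; first by rewrite preimage_nil.
by rewrite preimage_cons; exact: measurableU.
Qed.

Lemma Pr_rv_mem (s : seq K) : uniq s ->
  Pr P [set w | X w \in s] = \sum_(x <- s) Pr P [set w | X w = x].
Proof.
elim: s => [_|x s IH /andP[xs us]]; first by rewrite preimage_nil big_nil /Pr measure0.
rewrite preimage_cons PrU ?big_cons ?IH //; first exact: measurable_rv_mem.
by apply/seteqP; split=> w // [/= ->]; rewrite (negbTE xs).
Qed.

Let preimage_enum (Q : pred K) :
  [set w | Q (X w)] = [set w | X w \in enum Q].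
Proof. by apply/seteqP; split=> w /=; rewrite mem_enum. Qed.

Lemma measurable_rv_pred (Q : pred K) : measurable [set w | Q (X w)].
Proof. by rewrite preimage_enum; exact: measurable_rv_mem. Qed.

Lemma Pr_rv_pred (Q : pred K) :
  Pr P [set w | Q (X w)] = \sum_(x | Q x) Pr P [set w | X w = x].
Proof. by rewrite preimage_enum Pr_rv_mem ?enum_uniq // big_enum. Qed.

End RandomVariable.
End FiniteRandomVariables.

Section Bijections.
Context {X Y : finType}.

Lemma is_bij_inj {f : {ffun X -> Y}} : is_bij f -> injective f.
Proof. by case/andP=> /injectiveP. Qed.

Lemma is_bij_surj {f : {ffun X -> Y}} : is_bij f -> forall y, exists x, f x = y.
Proof.
by case/andP=> _ /forallP fsurj y; have /existsP[x /eqP] := fsurj y; exists x.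
Qed.

Definition comp_tperm (f : {ffun X -> Y}) (r s : X) : {ffun X -> Y} :=
  [ffun x => f (tperm r s x)].

Lemma is_bij_comp_tperm f r s : is_bij f -> is_bij (comp_tperm f r s).
Proof.
move=> bf; apply/andP; split.
  by apply/injectiveP=> x y; rewrite !ffunE => /(is_bij_inj bf)/perm_inj.
apply/forallP=> y; have [x <-] := is_bij_surj bf y.
by apply/existsP; exists (tperm r s x); rewrite ffunE tpermK.
Qed.

Lemma comp_tperm_inj {f g : {ffun X -> Y}} {r s t : X} : is_bij f -> f r = g r ->
  comp_tperm f r s = comp_tperm g r t -> f = g /\ s = t.
Proof.
move=> bf fgr /ffunP fg.
have st : s = t.
  have := fg t; rewrite !ffunE tpermR -fgr => /(is_bij_inj bf) tr.
  by rewrite -(tpermK r s t) tr tpermL.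
split=> //; apply/ffunP=> x.
by have := fg (tperm r s x); rewrite !ffunE st tpermK.
Qed.

End Bijections.

Section SwapCounting.
Variables (R : realFieldType) (Rr Rr' : finType) (r : Rr) (r' : Rr').
Variables (W : {ffun Rr -> Rr'} -> R) (rho : R).
Hypothesis W_ge0 : forall f, 0 <= W f.
Hypothesis W_swap : forall f s, is_bij f -> s != r ->
  rho * W f <= W (comp_tperm f r s).

(* The pairs (f, s) with f r = r' and s <> r map injectively, via
   f o (r s), into the bijections with f r <> r'. *)
Lemma swap_counting :
  (1 + (#|Rr|%:R - 1) * rho) * \sum_(f | is_bij f && (f r == r')) W f
   <= \sum_(f | is_bij f) W f.
Proof.
rewrite [leRHS](bigID (fun f : {ffun Rr -> Rr'} => f r == r')) /= mulrDl mul1r lerD2l.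
pose D := [set p : {ffun Rr -> Rr'} * Rr | is_bij p.1 && (p.1 r == r') && (p.2 != r)].
pose h (p : {ffun Rr -> Rr'} * Rr) := comp_tperm p.1 r p.2.
have h_inj : {in D &, injective h}.
  move=> [f s] [g t]; rewrite !inE /=.
  move=> /andP[/andP[bf /eqP fr] _] /andP[/andP[_ /eqP gr] _].
  by move=> /(comp_tperm_inj bf); rewrite fr gr => /(_ erefl) [fg st]; congr pair.
have h_img y : y \in h @: D -> is_bij y && (y r != r').
  case/imsetP=> -[f s] + ->{y}; rewrite inE /= => /andP[/andP[bf /eqP fr] sr].
  rewrite is_bij_comp_tperm //= ffunE tpermL -fr.
  by apply: contra sr => /eqP/(is_bij_inj bf)/eqP.
have -> : (#|Rr|%:R - 1) * rho * \sum_(f | is_bij f && (f r == r')) W f =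
    \sum_(p in D) rho * W p.1.
  under [RHS]eq_bigl => p do rewrite inE.
  rewrite mulrC big_distrl /=.
  transitivity (\sum_(f | is_bij f && (f r == r')) \sum_(s | s != r) rho * W f).
    apply: eq_bigr => f _.
    rewrite sumr_const cardC1 -subn1 -[rho * W f *+ _]mulr_natr.
    rewrite natrB ?card_gt0; [ring | by apply/card_gt0P; exists r].
  by rewrite pair_big_dep.
apply: le_trans (_ : \sum_(y in h @: D) W y <= _).
  rewrite big_imset //=; apply: ler_sum => -[f s].
  by rewrite inE => /andP[/andP[bf _] sr]; exact: W_swap.
rewrite [leRHS](bigID (mem (h @: D))) /= -[leLHS]addr0 lerD ?sumr_ge0 //.
rewrite le_eqVlt; apply/predU1P; left; apply: eq_bigl => y.
by case: (boolP (y \in h @: D)) => [/h_img ->|]; rewrite ?andbF.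
Qed.

End SwapCounting.

Section BigMin.
Context {R : realDomainType} {I : finType}.
Variable F : I -> R.

Lemma bigmin1_le j : \big[Order.min/1]_(i : I) F i <= F j.
Proof. by rewrite (bigD1 j) //= ge_min lexx. Qed.

Lemma bigmin1_gt0 : (forall i, 0 < F i) -> 0 < \big[Order.min/1]_(i : I) F i.
Proof.
by move=> F_gt0; apply: (big_ind (fun x => 0 < x)) => // x y x0 y0; rewrite lt_min x0 y0.
Qed.

End BigMin.

Section OddsRatio.
Context {R : realType} {V : finType}.
Variable M : V -> V -> R.
Hypothesis M_gt0 : forall u v, 0 < M u v.

Lemma AR_gt0 : 0 < AR M.
Proof. by do 4!apply: bigmin1_gt0 => ?; rewrite divr_gt0 ?mulr_gt0. Qed.

Lemma AR_mul_le u v u' v' : AR M * (M u u' * M v v') <= M u v' * M v u'.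
Proof.
rewrite -ler_pdivlMr ?mulr_gt0 // /AR.
apply: le_trans (bigmin1_le _ u) _; apply: le_trans (bigmin1_le _ v) _.
by apply: le_trans (bigmin1_le _ u') _; apply: bigmin1_le.
Qed.

End OddsRatio.

Definition pram_prob {R : realType} {Rr Att : finType} {Va : Att -> finType}
    (A : forall a : Att, Va a -> Va a -> R)
    (tau : table Rr (value Va)) (g : {ffun Rr -> value Va}) : R :=
  \prod_(x : Rr) \prod_(a : Att) A a (tau x a) (g x a).

Section PramSwap.
Context {R : realType} {Rr Rr' Att : finType} {Va : Att -> finType}.
Variable A : forall a : Att, Va a -> Va a -> R.
Hypothesis A_gt0 : forall a u v, 0 < A a u v.
Variables (tau : table Rr (value Va)) (tau' : table Rr' (value Va)).

Definition pram_lik (f : {ffun Rr -> Rr'}) : R :=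
  pram_prob A tau [ffun x => tau' (f x)].

Let row_lik x y := \prod_(a : Att) A a (tau x a) (tau' y a).

Let row_lik_gt0 x y : 0 < row_lik x y.
Proof. exact: prodr_gt0. Qed.

Lemma pram_lik_ge0 f : 0 <= pram_lik f.
Proof. by do 2!apply: prodr_ge0 => ? _; exact/ltW. Qed.

Lemma prod_AR_ge0 : 0 <= \prod_(a : Att) AR (A a).
Proof. by apply: prodr_ge0 => a _; rewrite ltW ?AR_gt0. Qed.

(* Only the rows [r] and [s] change; attribute by attribute, the odds ratio
   of these two rows is bounded below by [AR]. *)
Lemma pram_lik_tperm f r s : s != r ->
  (\prod_(a : Att) AR (A a)) * pram_lik f <= pram_lik (comp_tperm f r s).
Proof.
move=> sr; rewrite /pram_lik /pram_prob (bigD1 r) //= (bigD1 s) //=.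
rewrite [leRHS](bigD1 r) //= [in leRHS](bigD1 s) //= !ffunE tpermL tpermR.
rewrite [in leLHS](eq_bigr (fun x => row_lik x (f x))) => [|x _]; last first.
  by apply: eq_bigr => a _; rewrite ffunE.
rewrite [in leRHS](eq_bigr (fun x => row_lik x (f x))) => [|x /andP[xr xs]]; last first.
  by apply: eq_bigr => a _; rewrite !ffunE tpermD // eq_sym.
rewrite !mulrA; apply: ler_wpM2r; first by apply: prodr_ge0 => x _; exact/ltW.
rewrite -mulrA -!big_split /=; apply: ler_prod => a _.
by rewrite AR_mul_le // andbT mulr_ge0 ?ltW ?AR_gt0 ?mulr_gt0.
Qed.

Lemma pram_swap_counting r r' :
  PRAM_k Rr A * \sum_(f | is_bij f && (f r == r')) pram_lik f
  <= \sum_(f | is_bij f) pram_lik f.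
Proof.
apply: swap_counting; [exact: pram_lik_ge0 | move=> f s _; exact: pram_lik_tperm].
Qed.

Lemma PRAM_k_ge1 : (0 < #|Rr|)%N -> 1 <= PRAM_k Rr A.
Proof.
move=> Rr_gt0; rewrite /PRAM_k lerDl mulr_ge0 ?prod_AR_ge0 // subr_ge0.
by rewrite ler1n.
Qed.

End PramSwap.

Lemma ler_div_inv (R : realFieldType) (k x y : R) :
  0 < k -> 0 <= y -> k * x <= y -> x / y <= k^-1.
Proof.
move=> k_gt0; rewrite le_eqVlt => /predU1P[<- _ | y_gt0 kxy].
  by rewrite invr0 mulr0 invr_ge0 ltW.
by rewrite ler_pdivrMr // ler_pdivlMl.
Qed.

Section PramMechanism.
Local Open Scope classical_set_scope.
Context {R : realType} {d : measure_display} {Omega : measurableType d}.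
Context {P : probability Omega R}.
Context {Rr Rr' Att : finType} {Va : Att -> finType}.
Context {A : forall a : Att, Va a -> Va a -> R}.
Context {Pi : Omega -> {ffun Rr -> Rr'}}.
Context {Delta : Omega -> {ffun table Rr (value Va) -> {ffun Rr -> value Va}}}.
Hypothesis hmech : privacy_mechanism P Pi Delta.
Hypothesis hpram : is_PRAM P A Delta.

Let inv_nbij : R := (#|[pred f : {ffun Rr -> Rr'} | is_bij f]|%:R)^-1.

Lemma Pr_not_bij : Pr P [set w | ~~ is_bij (Pi w)] = 0.
Proof.
case: hmech => hPi [_ hunif].
rewrite (Pr_rv_pred _ hPi (fun f => ~~ is_bij f)).
by apply: big1 => f /negbTE nbf; rewrite hunif nbf.
Qed.

Lemma Pr_PRAM_table tau g : Pr P [set w | Delta w tau = g] = pram_prob A tau g.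
Proof.
have [hindep hmarg] := hpram tau.
rewrite [X in Pr P X](_ : _ = [set w | forall x, Delta w tau x = g x]).
  by rewrite hindep; apply: eq_bigr => x _; rewrite hmarg.
by apply/seteqP; split=> w /= => [-> //|Dg]; apply/ffunP.
Qed.

Lemma sum_Pr_Delta_at tau (tau' : table Rr' (value Va)) (f : {ffun Rr -> Rr'}) :
  \sum_(D : {ffun table Rr (value Va) -> {ffun Rr -> value Va}}
         | D tau == [ffun x => tau' (f x)]) Pr P [set w | Delta w = D] =
  pram_lik A tau tau' f.
Proof.
case: hmech => _ [hDelta _].
rewrite -(Pr_rv_pred _ hDelta (fun D => D tau == _)) /pram_lik -Pr_PRAM_table.
by congr Pr; apply/seteqP; split=> w /= /eqP.
Qed.

Context {T : Omega -> table Rr (value Va)} {T' : Omega -> table Rr' (value Va)}.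
Hypotheses (hT : is_rv T) (hT' : is_rv T') (hfrom : mechanism_from P Pi Delta T T').
Variable tau' : table Rr' (value Va).

Lemma release_eq_iff w : is_bij (Pi w) ->
  T' w = tau' <-> Delta w (T w) = [ffun x => tau' (Pi w x)].
Proof.
case: hfrom => _ ->; rewrite /compPi => bPi; split=> [-> // | /ffunP eqD].
apply/ffunP=> y; have [x <-] := is_bij_surj bPi y.
by have := eqD x; rewrite !ffunE.
Qed.

Let Z w := (T w, Pi w, Delta w).

Let Pr_Z tau f D : Pr P [set w | Z w = (tau, f, D)] =
  Pr P [set w | T w = tau] * Pr P [set w | Pi w = f] * Pr P [set w | Delta w = D].
Proof.
case: hfrom => hindep _; rewrite -hindep.
congr Pr; apply/seteqP; split=> w; rewrite /Z /=.
  by case=> -> -> ->.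
by case=> -> [-> ->].
Qed.

Lemma Pr_release (Q : pred {ffun Rr -> Rr'}) :
  Pr P ([set w | T' w = tau'] `&` [set w | Q (Pi w)]) =
  inv_nbij * \sum_tau Pr P [set w | T w = tau] *
    \sum_(f | is_bij f && Q f) pram_lik A tau tau' f.
Proof.
case: hmech => hPi [hDelta hunif].
have hZ : is_rv Z by apply: is_rv_pair => //; exact: is_rv_pair.
pose G (z : table Rr (value Va) * {ffun Rr -> Rr'} *
           {ffun table Rr (value Va) -> {ffun Rr -> value Va}}) :=
  [&& is_bij z.1.2, Q z.1.2 & z.2 z.1.1 == [ffun x => tau' (z.1.2 x)]].
have -> : Pr P ([set w | T' w = tau'] `&` [set w | Q (Pi w)]) =
          Pr P [set w | G (Z w)].
  apply: (Pr_eq_off_null P [set w | ~~ is_bij (Pi w)]).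
  - exact: (measurable_rv_pred hPi (fun f => ~~ is_bij f)).
  - by apply: measurableI; [exact: hT' | exact: measurable_rv_pred].
  - exact: measurable_rv_pred.
  - exact: Pr_not_bij.
  move=> w /negP; rewrite negbK => bPi; rewrite /G /= bPi (release_eq_iff _ bPi).
  by split=> [[-> ->] | /and3P[_ -> /eqP ->]]; rewrite ?eqxx.
have sum_pairE (I J : finType) (F : I * J -> R) :
    \sum_z F z = \sum_i \sum_j F (i, j).
  by rewrite pair_bigA; apply: eq_bigr => -[].
rewrite (Pr_rv_pred _ hZ) big_mkcond !sum_pairE big_distrr /=.
apply: eq_bigr => tau _.
rewrite mulrCA big_distrr /= [in RHS]big_mkcond big_distrr /=.
apply: eq_bigr => f _; rewrite /G /=.
case: (boolP (is_bij f && Q f)) => [/andP[bf qf] | nbq]; last first.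
  rewrite !mulr0; apply: big1 => D _; case: ifP => // /and3P[bf qf _].
  by move: nbq; rewrite bf qf.
rewrite bf qf -big_mkcond /=.
under eq_bigr do rewrite Pr_Z.
by rewrite -big_distrr sum_Pr_Delta_at hunif bf mulrA.
Qed.

Lemma Pr_release_at r r' :
  Pr P ([set w | Pi w r = r'] `&` [set w | T' w = tau']) =
  inv_nbij * \sum_tau Pr P [set w | T w = tau] *
    \sum_(f | is_bij f && (f r == r')) pram_lik A tau tau' f.
Proof.
rewrite -(Pr_release (fun f => f r == r')) setIC.
by congr (Pr P (_ `&` _)); apply/seteqP; split=> w /eqP.
Qed.

Lemma Pr_release_all : Pr P [set w | T' w = tau'] =
  inv_nbij * \sum_tau Pr P [set w | T w = tau] *
    \sum_(f | is_bij f) pram_lik A tau tau' f.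
Proof.
have -> : [set w | T' w = tau'] = [set w | T' w = tau'] `&` [set w | predT (Pi w)].
  by apply/seteqP; split=> w // [].
rewrite Pr_release; congr (_ * _); apply: eq_bigr => tau _.
by under eq_bigl do rewrite andbT.
Qed.

End PramMechanism.

Theorem corollary4 (R : realType) (d : measure_display) (Omega : measurableType d)
  (P : probability Omega R) (Rr Rr' : finType) (hcard : #|Rr| = #|Rr'|)
  (Att : finType) (Va : Att -> finType)
  (A : forall a : Att, Va a -> Va a -> R)
  (hA : forall a, transition (A a))
  (hpos : forall a u v, 0 < A a u v)
  (Pi : Omega -> {ffun Rr -> Rr'})
  (Delta : Omega -> {ffun table Rr (value Va) -> {ffun Rr -> value Va}})
  (hmech : privacy_mechanism P Pi Delta)
  (hpram : is_PRAM P A Delta) :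
  Pk_anonymization P Pi Delta (PRAM_k Rr A).
Proof.
(* Only the positivity of the entries is needed, not [hcard] nor [hA]. *)
move=> tau' _ T T' hT hT' hfrom r r'.
have k_gt0 : 0 < PRAM_k Rr A.
  by apply: lt_le_trans (PRAM_k_ge1 _ hpos _); last by apply/card_gt0P; exists r.
rewrite /cPr (Pr_release_at hmech hpram hT hT' hfrom).
apply: ler_div_inv; rewrite ?Pr_ge0 // (Pr_release_all hmech hpram hT hT' hfrom).
rewrite mulrCA ler_wpM2l ?invr_ge0 // mulr_sumr ler_sum // => tau _.
by rewrite mulrCA ler_wpM2l ?Pr_ge0 ?pram_swap_counting.
Qed.
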